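(* Let $g(x)=\dfrac{1}{1-\cos(x)}$ for $x\in(0,2\pi)$. (i) Let $n\ge0$ be an even integer. For all $x,y>0$ with $x+y\le\pi$, $$\lambda_n\le g^{(n)}(x)+g^{(n)}(y)-g^{(n)}(x+y),\qquad \lambda_n=\frac{2}{n+2}\,(2^{n+2}-1)^2\,|B_{n+2}|,$$ and $\lambda_n$ is the best possible lower bound (i.e., the largest constant, depending only on $n$, for which the inequality holds for all such $x,y$). (ii) Let $n\ge1$ be an odd integer. For all $x,y>0$ with $x+y\le\pi$, $$\mu_n\le g^{(n)}(x+y)-g^{(n)}(x)-g^{(n)}(y),\qquad \mu_n=2\,|E_{n+1}|,$$ and $\mu_n$ is the best possible lower bound (i.e., the largest constant, depending only on $n$, for which the inequality holds for all such $x,y$).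
   Context: $B_m$ denotes the $m$-th Bernoulli number (defined by $\frac{t}{e^t-1}=\sum_{m\ge0}B_m\frac{t^m}{m!}$) and $E_m$ denotes the $m$-th Euler number (defined by $\frac{1}{\cosh t}=\sum_{m\ge0}E_m\frac{t^m}{m!}$). *)

From Stdlib Require Import Reals.
From Coquelicot Require Import Coquelicot.
Open Scope R_scope.

Definition bern_gen (t : R) : R :=
  match Req_EM_T t 0 with
  | left _ => 1
  | right _ => t / (exp t - 1)
  end.

(* B_m = m-th Taylor coefficient times m!, i.e. the m-th derivative at 0. *)
Definition bernoulli (m : nat) : R := Derive_n bern_gen m 0.

Definition euler_num (m : nat) : R := Derive_n (fun t => / cosh t) m 0.

(* g(x) = 1/(1 - cos x); only evaluated (with derivatives) on (0, pi]. *)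
Definition g (x : R) : R := / (1 - cos x).

Definition lambda_n (n : nat) : R :=
  2 / (INR n + 2) * (2 ^ (n + 2) - 1) ^ 2 * Rabs (bernoulli (n + 2)).

Definition mu_n (n : nat) : R := 2 * Rabs (euler_num (n + 1)).

From Stdlib Require Import Reals Arith Lra Lia.
From Coquelicot Require Import Coquelicot.
Open Scope R_scope.

(* Put h = x/2.  Then 1 - cos x = 2 sin^2 h, so g(x) = tan'(pi/2 - h) / 2 and
   (-1)^n g^(n)(x) = G n x := 2^-(n+1) tan^(n+1)(pi/2 - x/2).  As tan' = 1 + tan^2 and
   sec' = sec tan, every derivative of tan and sec is nonnegative on [0, pi/2), so G n is
   convex on (0, pi].  Convexity gives G x + G y >= 2 G (s/2) for s = x + y, and
   s |-> G s - 2 G (s/2) is nondecreasing because G' is; hence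
   G x + G y - G (x + y) >= 2 G (pi/2) - G pi, with equality at x = y = pi/2.
   Through tan (y/2 + pi/4) = sec y + tan y this constant is a combination of the derivatives
   of sec and tan at 0.  Comparing the Leibniz expansions of sec cos = 1 and tan cos = sin
   with those of sech cosh = 1 and tanh cosh = sinh identifies them, up to sign, with the
   derivatives of sech (Euler numbers) and tanh, and t tanh t = b(4t) - b(2t) + t with
   b(t) = t/(e^t - 1) expresses the latter by Bernoulli numbers. *)

(** * Binomial convolution *)

(* Unlike Stdlib's [C n k], [binom n k] vanishes for [k > n], so Pascal's rule
   holds without side conditions. *)
Fixpoint binom (n k : nat) : R :=
  match n, k with
  | O, O => 1
  | O, S _ => 0
  | S _, O => 1
  | S n', S k' => binom n' k' + binom n' (S k')
  end.

Lemma binom_n0 n : binom n 0 = 1.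
Proof. now destruct n. Qed.

Lemma binom_small n k : (n < k)%nat -> binom n k = 0.
Proof.
  revert k; induction n as [|n IH]; intros [|k] Hk; simpl; try lia; auto.
  rewrite !IH by lia. ring.
Qed.

Lemma binom_nn n : binom n n = 1.
Proof. induction n as [|n IH]; simpl; auto. rewrite IH, binom_small by lia. ring. Qed.

Lemma binom_ge0 n k : 0 <= binom n k.
Proof.
  revert k; induction n as [|n IH]; intros [|k]; simpl; try lra.
  pose proof (IH k); pose proof (IH (S k)). lra.
Qed.

Lemma sum_binom_pascal (T : nat -> nat -> R) k :
  sum_f_R0 (fun j => binom k j * (T (S j) (k - j)%nat + T j (S k - j)%nat)) k =
  sum_f_R0 (fun j => binom (S k) j * T j (S k - j)%nat) (S k).
Proof.
  assert (Hlast : sum_f_R0 (fun j => binom k j * T j (S k - j)%nat) k =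
                  sum_f_R0 (fun j => binom k j * T j (S k - j)%nat) (S k)).
  { rewrite tech5, binom_small by lia. ring. }
  rewrite (sum_eq _ (fun j => binom k j * T (S j) (k - j)%nat +
                              binom k j * T j (S k - j)%nat)) by (intros; ring).
  rewrite plus_sum, Hlast, !(decomp_sum _ (S k)) by lia. simpl pred.
  rewrite binom_n0, !binom_n0, Nat.sub_0_r.
  rewrite (sum_eq (fun i => binom (S k) (S i) * T (S i) (S k - S i)%nat)
             (fun j => binom k j * T (S j) (k - j)%nat +
                       binom k (S j) * T (S j) (k - j)%nat)) by (intros; simpl; ring).
  rewrite plus_sum. simpl (S k - S _)%nat. ring.
Qed.

Definition bconv (u v : nat -> R) (m : nat) : R :=
  sum_f_R0 (fun k => binom m k * u k * v (m - k)%nat) m.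

Lemma bconv_inj_l (u v a : nat -> R) : a 0%nat = 1 ->
  (forall m, bconv u a m = bconv v a m) -> forall m, u m = v m.
Proof.
  intros Ha0 Huva m. induction m as [m IH] using lt_wf_ind.
  specialize (Huva m). unfold bconv in Huva. destruct m as [|m].
  - simpl in Huva. rewrite Ha0 in Huva. lra.
  - rewrite !tech5, Nat.sub_diag, binom_nn, Ha0 in Huva.
    rewrite (sum_eq (fun k => binom (S m) k * u k * a (S m - k)%nat)
               (fun k => binom (S m) k * v k * a (S m - k)%nat)) in Huva
      by (intros k Hk; rewrite IH by lia; reflexivity).
    lra.
Qed.

Lemma bconv_scale (s t u a a' : nat -> R) m :
  (forall j, Nat.even j = false -> a j = 0) -> (forall j, a' j = t j * a j) ->
  (forall k l, Nat.even l = true -> s (k + l)%nat = s k * t l) ->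
  bconv (fun j => s j * u j) a' m = s m * bconv u a m.
Proof.
  intros Ha Ha' Hst. unfold bconv. rewrite scal_sum. apply sum_eq. intros k Hk.
  rewrite Ha'. destruct (Nat.even (m - k)) eqn:He.
  - replace (s m) with (s k * t (m - k)%nat) by (rewrite <- Hst by exact He; f_equal; lia).
    ring.
  - rewrite Ha by exact He. ring.
Qed.

Lemma bconv_parity_zero (u a r : nat -> R) (e : bool) :
  a 0%nat = 1 -> (forall j, Nat.even j = false -> a j = 0) ->
  (forall m, bconv u a m = r m) -> (forall m, Nat.even m = e -> r m = 0) ->
  forall m, Nat.even m = e -> u m = 0.
Proof.
  intros Ha0 Ha Hu Hr.
  set (s j := if Bool.eqb (Nat.even j) e then 0 else 1).
  assert (Hsu : forall m, s m * u m = u m).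
  { apply (bconv_inj_l _ _ a Ha0). intros m.
    rewrite (bconv_scale s (fun _ => 1) u a a), Hu; auto; [| intros; ring |].
    - unfold s. destruct (Bool.eqb_spec (Nat.even m) e) as [He|_]; [rewrite Hr|]; auto; ring.
    - intros k l Hl. unfold s. rewrite Nat.even_add, Hl. destruct (Nat.even k); simpl; ring. }
  intros m Hm. rewrite <- Hsu. unfold s. rewrite Hm, Bool.eqb_reflx. ring.
Qed.

(* [i^k = qsign k * i^(k mod 2)]: passing from an even [f] to [f (i x)] (from an odd [f]
   to [-i f (i x)]) multiplies the k-th derivative at 0 by [qsign k]; this is how the jets
   of [cosh], [sech], [tanh] at 0 are obtained from those of [cos], [sec], [tan]. *)
Definition qsign (k : nat) : R := (-1) ^ Nat.div2 k.

Lemma qsign_0 : qsign 0 = 1.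
Proof. reflexivity. Qed.

Lemma qsign_S k : qsign (S k) = if Nat.even k then qsign k else - qsign k.
Proof.
  unfold qsign. destruct (Nat.Even_or_Odd k) as [[p ->] | [p ->]].
  - rewrite Nat.even_mul, Nat.div2_succ_double, Nat.div2_double. reflexivity.
  - replace (S (2 * p + 1)) with (2 * S p)%nat by lia.
    rewrite Nat.add_1_r, Nat.even_succ, Nat.odd_mul, Nat.div2_succ_double, Nat.div2_double.
    simpl. ring.
Qed.

Lemma Rabs_qsign k : Rabs (qsign k) = 1.
Proof. apply pow_1_abs. Qed.

Lemma qsign_add_even k l : Nat.even l = true -> qsign (k + l) = qsign k * qsign l.
Proof.
  intros Hl. apply Nat.even_spec in Hl as [p ->]. unfold qsign.
  rewrite Nat.div2_double, <- pow_add. f_equal.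
  induction p as [|p IH]; [now rewrite Nat.mul_0_r, !Nat.add_0_r|].
  replace (k + 2 * S p)%nat with (S (S (k + 2 * p))) by lia. cbn [Nat.div2]. rewrite IH. lia.
Qed.

Lemma qsign_sq k : qsign k * qsign k = 1.
Proof. unfold qsign. rewrite <- Rpow_mult_distr, <- pow1 with (Nat.div2 k). f_equal. ring. Qed.

Lemma bconv_qsign_transfer (u u' a a' r r' : nat -> R) :
  a 0%nat = 1 -> (forall j, Nat.even j = false -> a j = 0) ->
  (forall j, a' j = qsign j * a j) -> (forall m, r' m = qsign m * r m) ->
  (forall m, bconv u a m = r m) -> (forall m, bconv u' a' m = r' m) ->
  forall m, u' m = qsign m * u m.
Proof.
  intros Ha0 Ha Ha' Hr' Hu Hu'.
  apply (bconv_inj_l _ _ a'); [rewrite Ha', Ha0, qsign_0; ring|].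
  intros m. rewrite Hu', (bconv_scale qsign qsign u a a'), Hu; auto using qsign_add_even.
Qed.

(** * Smoothness on open sets *)

Definition tower (D : R -> Prop) (F : nat -> R -> R) : Prop :=
  forall k x, D x -> is_derive (F k) x (F (S k) x).

Definition tower_upto (N : nat) (D : R -> Prop) (F : nat -> R -> R) : Prop :=
  forall k x, (k < N)%nat -> D x -> is_derive (F k) x (F (S k) x).

Definition smooth_on (D : R -> Prop) (f : R -> R) : Prop := tower D (Derive_n f).

Definition jet (f : R -> R) (x : R) (k : nat) : R := Derive_n f k x.

Lemma tower_upto_scal N D c F :
  tower_upto N D F -> tower_upto N D (fun k x => c * F k x).
Proof. intros HF k x Hk Hx. apply is_derive_scal. auto. Qed.

Lemma tower_upto_mult N D F G : tower_upto N D F -> tower_upto N D G ->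
  tower_upto N D (fun k x => bconv (fun j => F j x) (fun j => G j x) k).
Proof.
  intros HF HG k x Hk Hx. unfold bconv.
  replace (sum_f_R0 (fun j => binom (S k) j * F j x * G (S k - j)%nat x) (S k))
    with (sum_f_R0 (fun j => binom (S k) j * (F j x * G (S k - j)%nat x)) (S k))
    by (apply sum_eq; intros; ring).
  rewrite <- (sum_binom_pascal (fun a b => F a x * G b x)), <- sum_n_Reals.
  apply (is_derive_ext (fun y => sum_n (fun j => binom k j * (F j y * G (k - j)%nat y)) k)).
  { intros y. rewrite sum_n_Reals. apply sum_eq. intros; ring. }
  apply (@is_derive_sum_n R_AbsRing R_NormedModule
           (fun j y => binom k j * (F j y * G (k - j)%nat y))). intros j Hj. apply is_derive_scal.
  replace (S k - j)%nat with (S (k - j)) by lia.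
  change (F (S j) x * G (k - j)%nat x + F j x * G (S (k - j)) x) with
    (plus (mult (F (S j) x) (G (k - j)%nat x)) (mult (F j x) (G (S (k - j)) x))).
  apply (is_derive_mult (F j) (G (k - j)%nat));
    [apply HF | apply HG | intros; apply Rmult_comm]; auto; lia.
Qed.

Lemma Derive_n_Derive f k x : Derive_n (Derive f) k x = Derive_n f (S k) x.
Proof. now rewrite <- Nat.add_1_r, <- Derive_n_comp. Qed.

Lemma smooth_on_sub (D1 D2 : R -> Prop) f :
  (forall x, D2 x -> D1 x) -> smooth_on D1 f -> smooth_on D2 f.
Proof. intros H Hf k x Hx. auto. Qed.

Section Smoothness.

Variable D : R -> Prop.

Lemma smooth_on_ext f g : (forall x, f x = g x) -> smooth_on D f -> smooth_on D g.
Proof.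
  intros Efg Hf k x Hx.
  apply (is_derive_ext (Derive_n f k)); [intros; now apply Derive_n_ext|].
  rewrite <- (Derive_n_ext f g (S k) x Efg). auto.
Qed.

Lemma smooth_on_Derive f : smooth_on D f -> smooth_on D (Derive f).
Proof.
  intros Hf k x Hx. rewrite Derive_n_Derive.
  apply (is_derive_ext (Derive_n f (S k))); [intros; now rewrite Derive_n_Derive|].
  auto.
Qed.

Lemma smooth_on_ex_derive_n f k x : smooth_on D f -> D x -> ex_derive_n f k x.
Proof. intros Hf Hx. destruct k as [|k]; [exact I|]. eexists. now apply Hf. Qed.

Lemma smooth_on_of_ex_derive_n f : (forall k x, D x -> ex_derive_n f k x) -> smooth_on D f.
Proof. intros Hf k x Hx. apply Derive_correct, (Hf (S k) x Hx). Qed.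

Lemma smooth_on_const c : smooth_on D (fun _ => c).
Proof.
  intros k x _. rewrite Derive_n_const.
  apply (is_derive_ext (fun _ => match k with O => c | S _ => 0 end)).
  { intros t. destruct k; [reflexivity|now rewrite Derive_n_const]. }
  auto_derive; auto.
Qed.

Hypothesis HD : open D.

Lemma smooth_on_locally f n x : smooth_on D f -> D x ->
  locally x (fun y => forall k, (k <= n)%nat -> ex_derive_n f k y).
Proof.
  intros Hf Hx. apply (filter_imp D); [|now apply HD].
  intros y Hy k _. now apply smooth_on_ex_derive_n.
Qed.

Lemma Derive_n_plus_on f g k x : smooth_on D f -> smooth_on D g -> D x ->
  Derive_n (fun y => f y + g y) k x = Derive_n f k x + Derive_n g k x.
Proof. intros Hf Hg Hx. apply Derive_n_plus; now apply smooth_on_locally. Qed.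

Lemma Derive_n_minus_on f g k x : smooth_on D f -> smooth_on D g -> D x ->
  Derive_n (fun y => f y - g y) k x = Derive_n f k x - Derive_n g k x.
Proof. intros Hf Hg Hx. apply Derive_n_minus; now apply smooth_on_locally. Qed.

Lemma Derive_n_tower_upto N F f : tower_upto N D F -> (forall x, D x -> f x = F 0%nat x) ->
  forall k x, (k <= N)%nat -> D x -> Derive_n f k x = F k x.
Proof.
  intros HF Hf k. induction k as [|k IH]; intros x Hk Hx; simpl; [auto|].
  rewrite (Derive_ext_loc _ (F k)).
  - apply is_derive_unique. apply HF; auto; lia.
  - apply (filter_imp D); [|now apply HD]. intros y Hy. apply IH; auto; lia.
Qed.

Lemma tower_upto_Derive_n N F f : tower_upto N D F -> (forall x, D x -> f x = F 0%nat x) ->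
  tower_upto N D (Derive_n f).
Proof.
  intros HF Hf k x Hk Hx.
  pose proof (Derive_n_tower_upto N F f HF Hf) as E.
  rewrite (E (S k)) by (auto; lia).
  apply (is_derive_ext_loc (F k)); [|auto].
  apply (filter_imp D); [|now apply HD]. intros y Hy. symmetry. apply E; auto; lia.
Qed.

Lemma Derive_n_tower F f : tower D F -> (forall x, D x -> f x = F 0%nat x) ->
  forall k x, D x -> Derive_n f k x = F k x.
Proof.
  intros HF Hf k x Hx. apply (Derive_n_tower_upto k F); auto.
  intros j y _ Hy. auto.
Qed.

Lemma smooth_on_tower F f : tower D F -> (forall x, D x -> f x = F 0%nat x) -> smooth_on D f.
Proof.
  intros HF Hf k x Hx. apply (tower_upto_Derive_n (S k) F f); auto.
  intros j y _ Hy. auto.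
Qed.

Lemma smooth_on_mult_tower f g : smooth_on D f -> smooth_on D g ->
  tower D (fun k x => bconv (jet f x) (jet g x) k).
Proof.
  intros Hf Hg k x Hx.
  exact (tower_upto_mult (S k) D _ _ (fun j y _ Hy => Hf j y Hy) (fun j y _ Hy => Hg j y Hy)
           k x (Nat.lt_succ_diag_r k) Hx).
Qed.

Lemma Derive_n_mult f g k x : smooth_on D f -> smooth_on D g -> D x ->
  Derive_n (fun y => f y * g y) k x = bconv (jet f x) (jet g x) k.
Proof.
  intros Hf Hg. apply (Derive_n_tower (fun k x => bconv (jet f x) (jet g x) k)).
  { now apply smooth_on_mult_tower. }
  intros y _. unfold bconv, jet. simpl. ring.
Qed.

Lemma smooth_on_mult f g : smooth_on D f -> smooth_on D g -> smooth_on D (fun x => f x * g x).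
Proof.
  intros Hf Hg. apply (smooth_on_tower _ _ (smooth_on_mult_tower f g Hf Hg)).
  intros y _. unfold bconv, jet. simpl. ring.
Qed.

Lemma Derive_n_S_of_derive f p : (forall y, D y -> is_derive f y (p y)) ->
  forall k x, D x -> Derive_n f (S k) x = Derive_n p k x.
Proof.
  intros Hfp k x Hx. rewrite <- Derive_n_Derive.
  apply Derive_n_ext_loc. apply (filter_imp D); [|now apply HD].
  intros y Hy. apply is_derive_unique. auto.
Qed.

Lemma tower_upto_S_of_derive N f p : (forall y, D y -> is_derive f y (p y)) ->
  tower_upto N D (Derive_n p) -> tower_upto (S N) D (Derive_n f).
Proof.
  intros Hfp Hp [|k] x Hk Hx.
  - change (is_derive f x (Derive f x)). rewrite (is_derive_unique f x (p x)); auto.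
  - rewrite (Derive_n_S_of_derive f p Hfp (S k)) by auto.
    apply (is_derive_ext_loc (Derive_n p k)); [|apply Hp; auto; lia].
    apply (filter_imp D); [|now apply HD]. intros y Hy.
    symmetry. now apply (Derive_n_S_of_derive f p).
Qed.

Lemma smooth_on_inv f : smooth_on D f -> (forall x, D x -> f x <> 0) ->
  smooth_on D (fun x => / f x).
Proof.
  intros Hf Hnz. set (h x := / f x).
  set (p x := -1 * (Derive f x * (h x * h x))).
  assert (Hh : forall y, D y -> is_derive h y (p y)).
  { intros y Hy. unfold p, h.
    replace (-1 * (Derive f y * (/ f y * / f y))) with (- Derive f y / f y ^ 2)
      by (field; auto).
    apply is_derive_inv; [apply (Hf 0%nat)|]; auto. }
  (* [h' = - f' h h] is smooth to order [N] as soon as [h] is, so [h] is smooth to order [N+1]. *)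
  assert (Htow : forall N, tower_upto N D (Derive_n h)).
  { induction N as [|N IH]; [intros k x Hk; lia|].
    apply (tower_upto_S_of_derive N h p Hh).
    apply (tower_upto_Derive_n N
      (fun k x => -1 * bconv (jet (Derive f) x) (fun j => bconv (jet h x) (jet h x) j) k)).
    - apply tower_upto_scal, tower_upto_mult.
      + intros k x _ Hx. now apply smooth_on_Derive.
      + apply tower_upto_mult; exact IH.
    - intros x _. unfold p, bconv, jet. simpl. ring. }
  intros k x Hx. apply (Htow (S k)); auto.
Qed.

Lemma bconv_jet_of_mult_eq f g h x m : smooth_on D f -> smooth_on D g ->
  (forall y, D y -> f y * g y = h y) -> D x ->
  bconv (jet f x) (jet g x) m = jet h x m.
Proof.
  intros Hf Hg Hfg Hx. rewrite <- Derive_n_mult; auto.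
  apply Derive_n_ext_loc. apply (filter_imp D); auto.
Qed.

Lemma Derive_n_mult_id f k x : smooth_on D f -> D x ->
  Derive_n (fun t => t * f t) k x = x * Derive_n f k x + INR k * Derive_n f (pred k) x.
Proof.
  intros Hf.
  apply (Derive_n_tower (fun k t => t * Derive_n f k t + INR k * Derive_n f (pred k) t)).
  - intros j y Hy. auto_derive.
    + split; [|split; auto]; eexists; apply Hf; auto.
    + destruct j as [|j]; simpl pred; rewrite ?S_INR; simpl.
      * change (fun t : R => f t) with f. ring.
      * change (fun t : R => Derive_n f j t) with (Derive_n f j).
        change (fun t : R => Derive (Derive_n f j) t) with (Derive (Derive_n f j)). ring.
  - intros t _. simpl. ring.
Qed.

End Smoothness.

Lemma Derive_n_affine (D : R -> Prop) f c d k x :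
  open D -> smooth_on D f -> D (c * x + d) ->
  Derive_n (fun y => f (c * y + d)) k x = c ^ k * Derive_n f k (c * x + d).
Proof.
  intros HD Hf Hx.
  assert (HDc : open (fun y => D (c * y + d))).
  { apply (open_comp (fun y => c * y + d)); auto. intros y _.
    apply (ex_derive_continuous (fun y => c * y + d)). auto_derive. auto. }
  apply (Derive_n_tower _ HDc (fun k y => c ^ k * Derive_n f k (c * y + d))); auto.
  - intros j y Hy. rewrite <- tech_pow_Rmult, (Rmult_comm c), Rmult_assoc.
    apply is_derive_scal.
    apply (is_derive_comp (Derive_n f j) (fun y => c * y + d) y (Derive_n f (S j) (c * y + d)) c).
    + now apply Hf.
    + auto_derive; auto; ring.
  - intros y _. simpl. ring.
Qed.

(** * Trigonometric and hyperbolic jets *)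

Definition cos_tower (k : nat) (x : R) : R :=
  if Nat.even k then qsign k * cos x else - qsign k * sin x.

Definition cosh_tower (k : nat) (x : R) : R := if Nat.even k then cosh x else sinh x.

Lemma tower_cos : tower (fun _ => True) cos_tower.
Proof.
  intros k x _. unfold cos_tower. rewrite Nat.even_succ, qsign_S. unfold Nat.odd.
  destruct (Nat.even k); simpl; auto_derive; auto; ring.
Qed.

Lemma tower_cosh : tower (fun _ => True) cosh_tower.
Proof.
  intros k x _. unfold cosh_tower. rewrite Nat.even_succ. unfold Nat.odd.
  destruct (Nat.even k); simpl; apply is_derive_Reals.
  - apply derivable_pt_lim_cosh.
  - apply derivable_pt_lim_sinh.
Qed.

Lemma tower_sin : tower (fun _ => True) (fun k x => - cos_tower (S k) x).
Proof. intros k x _. apply (is_derive_opp (cos_tower (S k))). now apply tower_cos. Qed.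

Lemma tower_sinh : tower (fun _ => True) (fun k => cosh_tower (S k)).
Proof. intros k x _. now apply tower_cosh. Qed.

Lemma Derive_n_cos k x : Derive_n cos k x = cos_tower k x.
Proof.
  apply (Derive_n_tower _ open_true _ _ tower_cos); auto.
  intros y _. unfold cos_tower. simpl. rewrite qsign_0. ring.
Qed.

Lemma Derive_n_sin k x : Derive_n sin k x = - cos_tower (S k) x.
Proof.
  apply (Derive_n_tower _ open_true _ _ tower_sin); auto.
  intros y _. unfold cos_tower, qsign. simpl. ring.
Qed.

Lemma Derive_n_cosh k x : Derive_n cosh k x = cosh_tower k x.
Proof. apply (Derive_n_tower _ open_true _ _ tower_cosh); auto. Qed.

Lemma Derive_n_sinh k x : Derive_n sinh k x = cosh_tower (S k) x.
Proof. apply (Derive_n_tower _ open_true _ _ tower_sinh); auto. Qed.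

Lemma smooth_cos D : smooth_on D cos.
Proof.
  apply (smooth_on_sub (fun _ => True)); auto.
  apply (smooth_on_tower _ open_true _ _ tower_cos). intros x _. exact (Derive_n_cos 0 x).
Qed.

Lemma smooth_sin D : smooth_on D sin.
Proof.
  apply (smooth_on_sub (fun _ => True)); auto.
  apply (smooth_on_tower _ open_true _ _ tower_sin). intros x _. exact (Derive_n_sin 0 x).
Qed.

Lemma smooth_cosh D : smooth_on D cosh.
Proof.
  apply (smooth_on_sub (fun _ => True)); auto.
  apply (smooth_on_tower _ open_true _ _ tower_cosh). intros x _. exact (Derive_n_cosh 0 x).
Qed.

Lemma smooth_sinh D : smooth_on D sinh.
Proof.
  apply (smooth_on_sub (fun _ => True)); auto.
  apply (smooth_on_tower _ open_true _ _ tower_sinh). intros x _. exact (Derive_n_sinh 0 x).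
Qed.

Lemma jet_cos_0 k : jet cos 0 k = if Nat.even k then qsign k else 0.
Proof.
  unfold jet. rewrite Derive_n_cos. unfold cos_tower. rewrite cos_0, sin_0.
  destruct (Nat.even k); ring.
Qed.

Lemma jet_sin_0 k : jet sin 0 k = if Nat.even k then 0 else qsign k.
Proof.
  unfold jet. rewrite Derive_n_sin. unfold cos_tower. rewrite cos_0, sin_0, Nat.even_succ, qsign_S.
  unfold Nat.odd. destruct (Nat.even k); simpl; ring.
Qed.

Lemma jet_cosh_0 k : jet cosh 0 k = if Nat.even k then 1 else 0.
Proof. unfold jet. rewrite Derive_n_cosh. unfold cosh_tower. now rewrite cosh_0, sinh_0. Qed.

Lemma jet_sinh_0 k : jet sinh 0 k = if Nat.even k then 0 else 1.
Proof.
  unfold jet. rewrite Derive_n_sinh. unfold cosh_tower. rewrite cosh_0, sinh_0, Nat.even_succ.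
  unfold Nat.odd. now destruct (Nat.even k).
Qed.

Definition Ipi2 (x : R) : Prop := - (PI / 2) < x < PI / 2.

Lemma open_Ipi2 : open Ipi2.
Proof. apply open_and; [apply open_gt | apply open_lt]. Qed.

Lemma Ipi2_0 : Ipi2 0.
Proof. unfold Ipi2. pose proof PI_RGT_0. lra. Qed.

Lemma cos_Ipi2 x : Ipi2 x -> 0 < cos x.
Proof. intros [H1 H2]. apply cos_gt_0; lra. Qed.

Lemma cosh_pos x : 0 < cosh x.
Proof. unfold cosh. pose proof (exp_pos x). pose proof (exp_pos (- x)). lra. Qed.

Definition sec (x : R) : R := / cos x.
Definition sech (x : R) : R := / cosh x.
Definition tanh (x : R) : R := sinh x / cosh x.

Lemma smooth_sec : smooth_on Ipi2 sec.
Proof.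
  apply (smooth_on_inv _ open_Ipi2 cos (smooth_cos _)).
  intros x Hx. apply Rgt_not_eq, cos_Ipi2, Hx.
Qed.

Lemma smooth_tan : smooth_on Ipi2 tan.
Proof. exact (smooth_on_mult _ open_Ipi2 sin sec (smooth_sin _) smooth_sec). Qed.

Lemma smooth_sech D : smooth_on D sech.
Proof.
  apply (smooth_on_sub (fun _ => True)); auto.
  apply (smooth_on_inv _ open_true cosh (smooth_cosh _)).
  intros x _. apply Rgt_not_eq, cosh_pos.
Qed.

Lemma smooth_tanh D : smooth_on D tanh.
Proof.
  apply (smooth_on_sub (fun _ => True)); auto.
  exact (smooth_on_mult _ open_true sinh sech (smooth_sinh _) (smooth_sech _)).
Qed.

Lemma jet_const c x k : jet (fun _ => c) x k = match k with O => c | S _ => 0 end.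
Proof. destruct k; [reflexivity|apply Derive_n_const]. Qed.

Lemma bconv_jet_sec_cos m : bconv (jet sec 0) (jet cos 0) m = jet (fun _ => 1) 0 m.
Proof.
  apply (bconv_jet_of_mult_eq Ipi2); auto using open_Ipi2, smooth_sec, smooth_cos, Ipi2_0.
  - intros y Hy. unfold sec. field. apply Rgt_not_eq, cos_Ipi2, Hy.
Qed.

Lemma bconv_jet_tan_cos m : bconv (jet tan 0) (jet cos 0) m = jet sin 0 m.
Proof.
  apply (bconv_jet_of_mult_eq Ipi2); auto using open_Ipi2, smooth_tan, smooth_cos, Ipi2_0.
  - intros y Hy. unfold tan. field. apply Rgt_not_eq, cos_Ipi2, Hy.
Qed.

Lemma jet_cos_0_0 : jet cos 0 0 = 1.
Proof. now rewrite jet_cos_0, qsign_0. Qed.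

Lemma jet_cos_0_odd j : Nat.even j = false -> jet cos 0 j = 0.
Proof. intros Hj. now rewrite jet_cos_0, Hj. Qed.

Lemma jet_cosh_cos_0 j : jet cosh 0 j = qsign j * jet cos 0 j.
Proof.
  rewrite jet_cos_0, jet_cosh_0.
  destruct (Nat.even j); [symmetry; apply qsign_sq | ring].
Qed.

Lemma jet_sech_0 m : jet sech 0 m = qsign m * jet sec 0 m.
Proof.
  apply (bconv_qsign_transfer _ _ (jet cos 0) (jet cosh 0)
           (jet (fun _ => 1) 0) (jet (fun _ => 1) 0));
    auto using jet_cos_0_0, jet_cos_0_odd, jet_cosh_cos_0, bconv_jet_sec_cos.
  - intros [|j]; rewrite jet_const; [rewrite qsign_0|]; ring.
  - intros k.
    apply (bconv_jet_of_mult_eq (fun _ => True)); auto using open_true, smooth_sech, smooth_cosh.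
    intros y _. unfold sech. field. apply Rgt_not_eq, cosh_pos.
Qed.

Lemma jet_tanh_0 m : jet tanh 0 m = qsign m * jet tan 0 m.
Proof.
  apply (bconv_qsign_transfer _ _ (jet cos 0) (jet cosh 0) (jet sin 0) (jet sinh 0));
    auto using jet_cos_0_0, jet_cos_0_odd, jet_cosh_cos_0, bconv_jet_tan_cos.
  - intros j. rewrite jet_sin_0, jet_sinh_0.
    destruct (Nat.even j); [ring | symmetry; apply qsign_sq].
  - intros k.
    apply (bconv_jet_of_mult_eq (fun _ => True)); auto using open_true, smooth_tanh, smooth_cosh.
    intros y _. unfold tanh. field. apply Rgt_not_eq, cosh_pos.
Qed.

Lemma jet_sec_0_odd m : Nat.even m = false -> jet sec 0 m = 0.
Proof.
  apply (bconv_parity_zero _ (jet cos 0) (jet (fun _ => 1) 0));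
    auto using jet_cos_0_0, jet_cos_0_odd, bconv_jet_sec_cos.
  intros [|j] Hj; [discriminate | apply jet_const].
Qed.

Lemma jet_tan_0_even m : Nat.even m = true -> jet tan 0 m = 0.
Proof.
  apply (bconv_parity_zero _ (jet cos 0) (jet sin 0));
    auto using jet_cos_0_0, jet_cos_0_odd, bconv_jet_tan_cos.
  intros j Hj. now rewrite jet_sin_0, Hj.
Qed.

Lemma bconv_nonneg (u v : nat -> R) m :
  (forall k, (k <= m)%nat -> 0 <= u k) -> (forall k, (k <= m)%nat -> 0 <= v k) ->
  0 <= bconv u v m.
Proof.
  intros Hu Hv. unfold bconv.
  apply Rle_trans with (sum_f_R0 (fun _ => 0) m); [rewrite sum_cte; lra|].
  apply sum_Rle. intros k Hk.
  apply Rmult_le_pos; [apply Rmult_le_pos|]; auto using binom_ge0 with arith.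
  apply Hv. lia.
Qed.

Lemma Derive_n_tan_S k y : Ipi2 y ->
  Derive_n tan (S k) y = jet (fun _ => 1) y k + bconv (jet tan y) (jet tan y) k.
Proof.
  intros Hy.
  rewrite (Derive_n_S_of_derive _ open_Ipi2 tan (fun x => 1 + tan x * tan x)); auto.
  - rewrite Derive_n_plus_on with (D := Ipi2); auto using open_Ipi2, smooth_on_const.
    + now rewrite Derive_n_mult with (D := Ipi2); auto using open_Ipi2, smooth_tan.
    + apply smooth_on_mult; auto using open_Ipi2, smooth_tan.
  - intros x Hx. replace (1 + tan x * tan x) with (tan x ^ 2 + 1) by ring.
    apply is_derive_tan, Rgt_not_eq, cos_Ipi2, Hx.
Qed.

Lemma Derive_n_sec_S k y : Ipi2 y -> Derive_n sec (S k) y = bconv (jet sec y) (jet tan y) k.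
Proof.
  intros Hy.
  rewrite (Derive_n_S_of_derive _ open_Ipi2 sec (fun x => sec x * tan x)); auto.
  - now rewrite Derive_n_mult with (D := Ipi2); auto using open_Ipi2, smooth_sec, smooth_tan.
  - intros x Hx. assert (Hc := cos_Ipi2 x Hx). unfold sec, tan.
    replace (/ cos x * (sin x / cos x)) with (- - sin x / cos x ^ 2) by (field; lra).
    apply (is_derive_inv cos x (- sin x)); [apply is_derive_cos | lra].
Qed.

Lemma jet_tan_nonneg k y : 0 <= y < PI / 2 -> 0 <= Derive_n tan k y.
Proof.
  intros Hy. assert (HI : Ipi2 y) by (unfold Ipi2; pose proof PI_RGT_0; lra).
  induction k as [k IH] using lt_wf_ind. destruct k as [|k].
  - apply Rmult_le_pos; [apply sin_ge_0; pose proof PI_RGT_0; lra|].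
    apply Rlt_le, Rinv_0_lt_compat, cos_Ipi2, HI.
  - rewrite Derive_n_tan_S by exact HI. apply Rplus_le_le_0_compat.
    + rewrite jet_const. destruct k; lra.
    + apply bconv_nonneg; intros; apply IH; lia.
Qed.

Lemma jet_sec_nonneg k y : 0 <= y < PI / 2 -> 0 <= Derive_n sec k y.
Proof.
  intros Hy. assert (HI : Ipi2 y) by (unfold Ipi2; pose proof PI_RGT_0; lra).
  induction k as [k IH] using lt_wf_ind. destruct k as [|k].
  - apply Rlt_le, Rinv_0_lt_compat, cos_Ipi2, HI.
  - rewrite Derive_n_sec_S by exact HI.
    apply bconv_nonneg; intros; [apply IH; lia | now apply jet_tan_nonneg].
Qed.

Lemma tan_half_add_pi4 y : Ipi2 y -> tan (1 / 2 * y + PI / 4) = sec y + tan y.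
Proof.
  intros [Hy1 Hy2]. pose proof PI_RGT_0.
  set (a := 1 / 2 * y + PI / 4).
  assert (Hs : 0 < sin a) by (apply sin_gt_0; unfold a; lra).
  assert (Hc : 0 < cos a) by (apply cos_gt_0; unfold a; lra).
  unfold tan, sec. replace y with (2 * a - PI / 2) by (unfold a; field).
  rewrite sin_minus, cos_minus, sin_PI2, cos_PI2, sin_2a, cos_2a_sin.
  field. split; lra.
Qed.

Lemma jet_tan_pi4 k : (1 / 2) ^ k * Derive_n tan k (PI / 4) = Derive_n sec k 0 + Derive_n tan k 0.
Proof.
  replace (PI / 4) with (1 / 2 * 0 + PI / 4) by ring.
  rewrite <- (Derive_n_affine _ tan) by (auto using open_Ipi2, smooth_tan;
    unfold Ipi2; pose proof PI_RGT_0; lra).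
  rewrite <- Derive_n_plus_on with (D := Ipi2);
    auto using open_Ipi2, smooth_sec, smooth_tan, Ipi2_0.
  apply Derive_n_ext_loc. apply (filter_imp Ipi2); [|apply open_Ipi2, Ipi2_0].
  exact tan_half_add_pi4.
Qed.

(** * Bernoulli numbers *)

Definition id_tower (k : nat) (x : R) : R := match k with O => x | 1%nat => 1 | _ => 0 end.

Lemma tower_id : tower (fun _ => True) id_tower.
Proof. intros [|[|k]] x _; unfold id_tower; auto_derive; auto. Qed.

Lemma Derive_n_id k x : Derive_n (fun t => t) k x = id_tower k x.
Proof. apply (Derive_n_tower _ open_true _ _ tower_id); auto. Qed.

Lemma smooth_id D : smooth_on D (fun t => t).
Proof.
  apply (smooth_on_sub (fun _ => True)); auto.
  apply (smooth_on_tower _ open_true _ _ tower_id). auto.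
Qed.

Definition expm1_div : R -> R := PSeries (PS_decr_1 (fun n => / INR (fact n))).

Lemma CV_radius_exp : CV_radius (fun n => / INR (fact n)) = p_infty.
Proof.
  apply CV_radius_infinite_DAlembert.
  - intros n. apply Rinv_neq_0_compat, not_0_INR, fact_neq_0.
  - apply (is_lim_seq_ext (fun n => / INR (S n))).
    + intros n. rewrite fact_simpl, mult_INR.
      assert (0 < INR (fact n)) by apply lt_0_INR, lt_O_fact.
      assert (0 < INR (S n)) by (apply lt_0_INR; lia).
      rewrite Rabs_pos_eq; [field; lra|].
      apply Rlt_le, Rdiv_lt_0_compat; apply Rinv_0_lt_compat; nra.
    + replace (Finite 0) with (Rbar_inv p_infty) by reflexivity.
      apply is_lim_seq_inv; [|discriminate].
      apply (is_lim_seq_incr_1 INR), is_lim_seq_INR.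
Qed.

Lemma smooth_PSeries a : CV_radius a = p_infty -> smooth_on (fun _ => True) (PSeries a).
Proof.
  intros Ha. apply smooth_on_of_ex_derive_n. intros k x _.
  apply ex_derive_n_PSeries. rewrite Ha. exact I.
Qed.

Lemma exp_expm1_div t : exp t = 1 + t * expm1_div t.
Proof.
  rewrite exp_Reals. unfold expm1_div. rewrite PSeries_decr_1; [simpl; field|].
  exists (exp t). apply is_exp_Reals.
Qed.

Lemma expm1_div_0 : expm1_div 0 = 1.
Proof. unfold expm1_div. rewrite PSeries_0. unfold PS_decr_1. simpl. field. Qed.

Lemma expm1_div_neq0 t : expm1_div t <> 0.
Proof.
  destruct (Req_dec t 0) as [->|Ht]; [rewrite expm1_div_0; lra|].
  intros H. apply Ht, exp_inv. rewrite exp_0, exp_expm1_div, H. ring.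
Qed.

Lemma bern_gen_eq t : bern_gen t = / expm1_div t.
Proof.
  unfold bern_gen. destruct (Req_EM_T t 0) as [->|Ht]; [rewrite expm1_div_0; field|].
  rewrite exp_expm1_div. replace (1 + t * expm1_div t - 1) with (t * expm1_div t) by ring.
  field. split; [apply expm1_div_neq0 | exact Ht].
Qed.

Lemma smooth_bern_gen D : smooth_on D bern_gen.
Proof.
  apply (smooth_on_sub (fun _ => True)); auto.
  apply (smooth_on_ext _ (fun t => / expm1_div t)); [intros; symmetry; apply bern_gen_eq|].
  apply smooth_on_inv; auto using open_true, expm1_div_neq0.
  apply smooth_PSeries. rewrite CV_radius_decr_1. exact CV_radius_exp.
Qed.

Lemma bern_gen_scale t : bern_gen (4 * t) - bern_gen (2 * t) = t * tanh t - t.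
Proof.
  unfold bern_gen, tanh, sinh, cosh.
  destruct (Req_EM_T (4 * t) 0) as [H4|H4]; destruct (Req_EM_T (2 * t) 0) as [H2|H2];
    try (exfalso; lra).
  - replace t with 0 by lra. ring.
  - assert (Ht : t <> 0) by lra.
    rewrite exp_Ropp. replace (4 * t) with (t + t + (t + t)) by ring.
    replace (2 * t) with (t + t) by ring. rewrite !exp_plus.
    set (p := exp t). assert (Hp : 0 < p) by apply exp_pos.
    assert (Hp1 : p <> 1) by (intros E; apply Ht, exp_inv; rewrite exp_0; exact E).
    assert (Hq : p * p - 1 <> 0).
    { replace (p * p - 1) with ((p - 1) * (p + 1)) by ring.
      apply Rmult_integral_contrapositive; split; lra. }
    assert (Hq2 : p * p * (p * p) - 1 <> 0).
    { replace (p * p * (p * p) - 1) with ((p * p - 1) * (p * p + 1)) by ring.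
      apply Rmult_integral_contrapositive; split; [exact Hq | nra]. }
    field. repeat split; auto; nra.
Qed.

Lemma bernoulli_tanh m : (2 <= m)%nat ->
  INR m * Derive_n tanh (pred m) 0 = (4 ^ m - 2 ^ m) * bernoulli m.
Proof.
  intros Hm.
  assert (Hb : forall k y, ex_derive_n bern_gen k y)
    by (intros; now apply smooth_on_ex_derive_n with (fun _ => True); auto using smooth_bern_gen).
  assert (Hbc : forall c k y, ex_derive_n (fun t => bern_gen (c * t)) k y)
    by (intros; apply ex_derive_n_comp_scal, filter_forall; auto).
  transitivity (Derive_n (fun t => bern_gen (4 * t) - bern_gen (2 * t)) m 0).
  - rewrite (Derive_n_ext (fun t => bern_gen (4 * t) - bern_gen (2 * t)) (fun t => t * tanh t - t))
      by apply bern_gen_scale.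
    rewrite Derive_n_minus_on with (D := fun _ => True), Derive_n_mult_id with (D := fun _ => True),
      Derive_n_id; auto using open_true, smooth_tanh, smooth_id.
    + destruct m as [|[|m]]; [lia | lia | simpl id_tower; ring].
    + apply smooth_on_mult; auto using open_true, smooth_tanh, smooth_id.
  - rewrite Derive_n_minus, !Derive_n_comp_scal, !Rmult_0_r by (apply filter_forall; auto).
    unfold bernoulli. ring.
Qed.

Lemma Rabs_bernoulli m : (2 <= m)%nat ->
  Rabs (bernoulli m) = INR m * Derive_n tan (pred m) 0 / (4 ^ m - 2 ^ m).
Proof.
  intros Hm. pose proof PI_RGT_0.
  assert (H2 : 2 <= 2 ^ m)
    by (apply (Rle_trans _ (2 ^ 1)); [simpl; lra | apply Rle_pow; [lra | lia]]).
  assert (Hd : 0 < 4 ^ m - 2 ^ m).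
  { replace (4 ^ m) with (2 ^ m * 2 ^ m) by (rewrite <- Rpow_mult_distr; f_equal; ring). nra. }
  pose proof (bernoulli_tanh m Hm) as HB.
  change (Derive_n tanh (pred m) 0) with (jet tanh 0 (pred m)) in HB.
  rewrite jet_tanh_0 in HB. unfold jet in HB.
  replace (bernoulli m) with (qsign (pred m) * (INR m * Derive_n tan (pred m) 0 / (4 ^ m - 2 ^ m)))
    by (apply (Rmult_eq_reg_l (4 ^ m - 2 ^ m)); [rewrite <- HB; field|]; lra).
  rewrite Rabs_mult, Rabs_qsign, Rmult_1_l, Rabs_pos_eq; [reflexivity|].
  apply Rmult_le_pos; [apply Rmult_le_pos; [apply pos_INR | apply jet_tan_nonneg; lra]|].
  apply Rlt_le, Rinv_0_lt_compat, Hd.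
Qed.

(** * Convexity *)

Lemma mvt_closed (f df : R -> R) a b : a <= b ->
  (forall z, a <= z <= b -> is_derive f z (df z)) ->
  exists c, a <= c <= b /\ f b - f a = df c * (b - a).
Proof.
  intros Hab Hd.
  destruct (MVT_gen f a b df) as [c [Hc E]]; rewrite ?Rmin_left, ?Rmax_right in * by lra.
  - intros z Hz. apply Hd. lra.
  - intros z Hz. apply continuity_pt_filterlim, (ex_derive_continuous f).
    exists (df z). apply Hd. lra.
  - exists c. auto.
Qed.

Lemma le_of_derive_nonneg (f df : R -> R) a b : a <= b ->
  (forall z, a <= z <= b -> is_derive f z (df z)) ->
  (forall z, a <= z <= b -> 0 <= df z) -> f a <= f b.
Proof.
  intros Hab Hd Hpos. destruct (mvt_closed f df a b Hab Hd) as [c [Hc E]].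
  assert (0 <= df c * (b - a)) by (apply Rmult_le_pos; [apply Hpos; lra | lra]). lra.
Qed.

Section ConvexDefect.

Variables (P P1 P2 : R -> R) (L : R).
Hypothesis HP : forall x, 0 < x <= L -> is_derive P x (P1 x).
Hypothesis HP1 : forall x, 0 < x <= L -> is_derive P1 x (P2 x).
Hypothesis HP2 : forall x, 0 < x <= L -> 0 <= P2 x.

Lemma convex_derive_le a b : 0 < a -> a <= b -> b <= L -> P1 a <= P1 b.
Proof.
  intros Ha Hab HbL.
  apply (le_of_derive_nonneg P1 P2); auto; intros z Hz; [apply HP1 | apply HP2]; lra.
Qed.

Lemma convex_midpoint x y : 0 < x -> x <= y -> x + y <= L ->
  2 * P ((x + y) / 2) <= P x + P y.
Proof.
  intros Hx Hxy HL. set (m := (x + y) / 2).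
  destruct (mvt_closed P P1 x m) as [c1 [Hc1 E1]];
    [unfold m; lra | intros; apply HP; unfold m in *; lra |].
  destruct (mvt_closed P P1 m y) as [c2 [Hc2 E2]];
    [unfold m; lra | intros; apply HP; unfold m in *; lra |].
  assert (P1 c1 <= P1 c2) by (apply convex_derive_le; unfold m in *; lra).
  assert (Hmx : y - m = m - x) by (unfold m; field).
  rewrite Hmx in E2. assert (0 <= m - x) by (unfold m; lra). nra.
Qed.

Lemma halving_defect_le s : 0 < s -> s <= L -> P s - 2 * P (s / 2) <= P L - 2 * P (L / 2).
Proof.
  intros Hs HsL.
  apply (le_of_derive_nonneg (fun u => P u - 2 * P (u / 2)) (fun u => P1 u - P1 (u / 2))); auto.
  - intros z Hz.
    replace (P1 z - P1 (z / 2)) with (P1 z - 2 * (/ 2 * P1 (z / 2))) by field.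
    apply (is_derive_minus P (fun u => 2 * P (u / 2))); [apply HP; lra|].
    apply (is_derive_scal (fun u => P (u / 2))).
    apply (is_derive_comp P (fun u => u / 2) z (P1 (z / 2)) (/ 2)); [apply HP; lra|].
    auto_derive; auto. field.
  - intros z Hz. assert (P1 (z / 2) <= P1 z) by (apply convex_derive_le; lra). lra.
Qed.

Lemma convex_defect_ge x y : 0 < x -> 0 < y -> x + y <= L ->
  2 * P (L / 2) - P L <= P x + P y - P (x + y).
Proof.
  intros Hx Hy HL.
  assert (2 * P ((x + y) / 2) <= P x + P y).
  { destruct (Rle_dec x y).
    - apply convex_midpoint; auto.
    - rewrite (Rplus_comm x y), (Rplus_comm (P x)). apply convex_midpoint; lra. }
  assert (P (x + y) - 2 * P ((x + y) / 2) <= P L - 2 * P (L / 2))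
    by (apply halving_defect_le; lra).
  lra.
Qed.

End ConvexDefect.

(** * The function g *)

Definition G (n : nat) (x : R) : R := (1 / 2) ^ S n * Derive_n tan (S n) (PI / 2 - x / 2).

Lemma Ipi2_half_shift x : 0 < x < 2 * PI -> Ipi2 (PI / 2 - x / 2).
Proof. unfold Ipi2. lra. Qed.

Lemma g_eq x : 0 < x < 2 * PI -> g x = 1 / 2 * Derive tan (PI / 2 - x / 2).
Proof.
  intros Hx.
  pose proof (Rgt_not_eq _ _ (cos_Ipi2 _ (Ipi2_half_shift x Hx))) as Hc.
  rewrite (is_derive_unique _ _ _ (is_derive_tan _ Hc)).
  unfold g, tan. rewrite sin_shift, cos_shift.
  replace x with (2 * (x / 2)) at 1 by field. rewrite cos_2a_sin.
  assert (Hs : 0 < sin (x / 2)) by (apply sin_gt_0; lra).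
  pose proof (sin2_cos2 (x / 2)) as E. unfold Rsqr in E.
  replace ((cos (x / 2) / sin (x / 2)) ^ 2 + 1)
    with ((sin (x / 2) * sin (x / 2) + cos (x / 2) * cos (x / 2)) / sin (x / 2) ^ 2)
    by (field; apply Rgt_not_eq, Hs).
  rewrite E. field. split; apply Rgt_not_eq; nra.
Qed.

Lemma Derive_n_g n x : 0 < x < 2 * PI -> Derive_n g n x = (-1) ^ n * G n x.
Proof.
  intros Hx.
  rewrite (Derive_n_ext_loc g (fun y => 1 / 2 * Derive tan (-1 / 2 * y + PI / 2))).
  - rewrite Derive_n_scal_l, (Derive_n_affine Ipi2 (Derive tan)), Derive_n_Derive;
      auto using open_Ipi2, smooth_on_Derive, smooth_tan.
    + unfold G. replace (-1 / 2 * x + PI / 2) with (PI / 2 - x / 2) by field.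
      replace (-1 / 2) with (-1 * (1 / 2)) by field. rewrite Rpow_mult_distr. simpl. ring.
    + replace (-1 / 2 * x + PI / 2) with (PI / 2 - x / 2) by field. now apply Ipi2_half_shift.
  - apply (filter_imp (fun y => 0 < y < 2 * PI)).
    + intros y Hy. rewrite g_eq by exact Hy.
      replace (-1 / 2 * y + PI / 2) with (PI / 2 - y / 2) by field. reflexivity.
    + apply (open_and _ _ (open_gt 0) (open_lt (2 * PI))). exact Hx.
Qed.

Lemma G_derive n x : 0 < x < 2 * PI -> is_derive (G n) x (- G (S n) x).
Proof.
  intros Hx. unfold G.
  replace (- ((1 / 2) ^ S (S n) * Derive_n tan (S (S n)) (PI / 2 - x / 2)))
    with ((1 / 2) ^ S n * (- (1 / 2) * Derive_n tan (S (S n)) (PI / 2 - x / 2))) by (simpl; ring).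
  apply is_derive_scal.
  apply (is_derive_comp (Derive_n tan (S n)) (fun y => PI / 2 - y / 2)).
  - apply smooth_tan. now apply Ipi2_half_shift.
  - auto_derive; auto.
Qed.

Lemma G_nonneg n x : 0 < x <= PI -> 0 <= G n x.
Proof.
  intros Hx. apply Rmult_le_pos; [apply pow_le; lra|].
  apply jet_tan_nonneg. lra.
Qed.

Lemma G_defect_ge n x y : 0 < x -> 0 < y -> x + y <= PI ->
  2 * G n (PI / 2) - G n PI <= G n x + G n y - G n (x + y).
Proof.
  pose proof PI_RGT_0.
  apply (convex_defect_ge _ (fun x => - G (S n) x) (G (S (S n)))); intros z Hz.
  - apply G_derive. lra.
  - rewrite <- (Ropp_involutive (G (S (S n)) z)).
    apply (is_derive_opp (G (S n))), G_derive. lra.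
  - now apply G_nonneg.
Qed.

Lemma G_half_defect n : 2 * G n (PI / 2) - G n PI =
  2 * (Derive_n sec (S n) 0 + Derive_n tan (S n) 0) - (1 / 2) ^ S n * Derive_n tan (S n) 0.
Proof.
  unfold G. rewrite <- jet_tan_pi4.
  replace (PI / 2 - PI / 2 / 2) with (PI / 4) by field.
  replace (PI / 2 - PI / 2) with 0 by field. ring.
Qed.

Lemma lambda_n_eq n : Nat.even n = true -> lambda_n n = 2 * G n (PI / 2) - G n PI.
Proof.
  intros Hn. rewrite G_half_defect.
  pose proof (jet_sec_0_odd (S n) ltac:(now rewrite Nat.even_succ, <- Nat.negb_even, Hn)) as Hsec.
  unfold jet in Hsec. unfold lambda_n.
  rewrite Hsec, Rabs_bernoulli by lia. replace (pred (n + 2)) with (S n) by lia.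
  set (w := 2 ^ (n + 2)).
  assert (Hw : 4 <= w).
  { unfold w. rewrite pow_add. pose proof (pow_R1_Rle 2 n ltac:(lra)). simpl. lra. }
  assert (H4 : 4 ^ (n + 2) = w * w) by (unfold w; rewrite <- Rpow_mult_distr; f_equal; ring).
  assert (Hhalf : (1 / 2) ^ S n = 2 / w).
  { unfold w. replace (1 / 2) with (/ 2) by field. rewrite pow_inv, Nat.add_comm. simpl.
    field. apply pow_nonzero. lra. }
  rewrite H4, Hhalf, plus_INR. simpl (INR 2).
  field. pose proof (pos_INR n). nra.
Qed.

Lemma mu_n_eq n : Nat.odd n = true -> mu_n n = 2 * G n (PI / 2) - G n PI.
Proof.
  intros Hn. pose proof PI_RGT_0. rewrite G_half_defect.
  pose proof (jet_tan_0_even (S n) ltac:(now rewrite Nat.even_succ)) as Htan.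
  unfold jet in Htan. rewrite Htan.
  unfold mu_n, euler_num. replace (n + 1)%nat with (S n) by lia.
  change (Derive_n (fun t => / cosh t) (S n) 0) with (jet sech 0 (S n)).
  rewrite jet_sech_0, Rabs_mult, Rabs_qsign, Rabs_pos_eq.
  - unfold jet. ring.
  - apply jet_sec_nonneg. lra.
Qed.

Theorem theorem2 :
  forall n : nat,
    (Nat.even n = true ->
       (forall x y : R, 0 < x -> 0 < y -> x + y <= PI ->
          lambda_n n <= Derive_n g n x + Derive_n g n y - Derive_n g n (x + y)) /\
       (forall c : R,
          (forall x y : R, 0 < x -> 0 < y -> x + y <= PI ->
             c <= Derive_n g n x + Derive_n g n y - Derive_n g n (x + y)) ->
          c <= lambda_n n)) /\
    (Nat.odd n = true ->
       (forall x y : R, 0 < x -> 0 < y -> x + y <= PI ->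
          mu_n n <= Derive_n g n (x + y) - Derive_n g n x - Derive_n g n y) /\
       (forall c : R,
          (forall x y : R, 0 < x -> 0 < y -> x + y <= PI ->
             c <= Derive_n g n (x + y) - Derive_n g n x - Derive_n g n y) ->
          c <= mu_n n)).
Proof.
  intros n. pose proof PI_RGT_0.
  assert (Hg : forall x y, 0 < x -> 0 < y -> x + y <= PI ->
    Derive_n g n x + Derive_n g n y - Derive_n g n (x + y) =
    (-1) ^ n * (G n x + G n y - G n (x + y))).
  { intros x y Hx Hy Hxy. rewrite !Derive_n_g by lra. ring. }
  assert (Hopt : G n (PI / 2) + G n (PI / 2) - G n (PI / 2 + PI / 2) = 2 * G n (PI / 2) - G n PI)
    by (replace (PI / 2 + PI / 2) with PI by field; ring).
  split; intros Hn.
  - assert (Hs : (-1) ^ n = 1) by (apply Nat.even_spec in Hn as [p ->]; apply pow_1_even).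
    rewrite Hs in Hg. rewrite lambda_n_eq by exact Hn. split.
    + intros x y Hx Hy Hxy. specialize (Hg x y Hx Hy Hxy).
      pose proof (G_defect_ge n x y Hx Hy Hxy). lra.
    + intros c Hc. specialize (Hc (PI / 2) (PI / 2) ltac:(lra) ltac:(lra) ltac:(lra)).
      specialize (Hg (PI / 2) (PI / 2) ltac:(lra) ltac:(lra) ltac:(lra)). lra.
  - assert (Hs : (-1) ^ n = -1)
      by (apply Nat.odd_spec in Hn as [p ->]; rewrite Nat.add_1_r; apply pow_1_odd).
    rewrite Hs in Hg. rewrite mu_n_eq by exact Hn. split.
    + intros x y Hx Hy Hxy. specialize (Hg x y Hx Hy Hxy).
      pose proof (G_defect_ge n x y Hx Hy Hxy). lra.
    + intros c Hc. specialize (Hc (PI / 2) (PI / 2) ltac:(lra) ltac:(lra) ltac:(lra)).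
      specialize (Hg (PI / 2) (PI / 2) ltac:(lra) ltac:(lra) ltac:(lra)). lra.
Qed.
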